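(* Let $U$ be a proper graded submodule of $M$. Then $U$ is a graded weakly $J_{gr}$-semiprime submodule of $M$ if and only if for every $r_g\in h(R)$, every graded submodule $K$ of $M$ and every $n\in\mathbb{Z}^+$ with $\{0\}\neq r_g^nK\subseteq U$, we have $r_gK\subseteq U+J_{gr}(M)$.
   Context: Standing conventions: $\Gamma$ is a group, $R=\bigoplus_{g\in\Gamma}R_g$ is a commutative $\Gamma$-graded ring with identity, and $M=\bigoplus_{g\in\Gamma}M_g$ is a unitary $\Gamma$-graded $R$-module. $h(R)=\bigcup_gR_g$, $h(M)=\bigcup_gM_g$ are the homogeneous elements. A submodule $U$ is graded if $U=\bigoplus_g(U\cap M_g)$. A graded submodule $U\neq M$ is Gr-maximal if every graded submodule $L$ with $U\subseteq L\subseteq M$ equals $U$ or $M$. $J_{gr}(M)$ is the intersection of all Gr-maximal submodules of $M$ ($=M$ if there are none). A proper graded submodule $U$ of $M$ is graded weakly $J_{gr}$-semiprime if whenever $r_g\in h(R)$, $m_h\in h(M)$, $n\in\mathbb{Z}^+$ and $0\neq r_g^nm_h\in U$, then $r_gm_h\in U+J_{gr}(M)$. *)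

From HB Require Import structures.
From mathcomp Require Import all_boot all_order all_algebra.
Set Implicit Arguments. Unset Strict Implicit. Unset Printing Implicit Defensive.
Import GRing.Theory.
Local Open Scope ring_scope.

Section Defs.
Variable Gamma : groupType.

Definition add_subgroups (V : zmodType) (S : Gamma -> V -> Prop) : Prop :=
  forall g, S g 0 /\ (forall x y, S g x -> S g y -> S g (x - y)).

(* V = (+)_{g in Gamma} S g  (internal direct sum): every element is a finite
   sum of homogeneous elements of pairwise distinct degrees, and such a
   finite sum vanishes only if all its terms vanish. *)
Definition direct_sum_decomp (V : zmodType) (S : Gamma -> V -> Prop) : Prop :=
  (forall x : V, exists s : seq (Gamma * V),
      uniq (map fst s) /\ (forall p, p \in s -> S p.1 p.2) /\
      x = \sum_(p <- s) p.2) /\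
  (forall s : seq (Gamma * V),
      uniq (map fst s) -> (forall p, p \in s -> S p.1 p.2) ->
      \sum_(p <- s) p.2 = 0 -> forall p, p \in s -> p.2 = 0).

Definition graded_ring (R : comPzRingType) (Rg : Gamma -> R -> Prop) : Prop :=
  add_subgroups Rg /\ direct_sum_decomp Rg /\
  (forall g h x y, Rg g x -> Rg h y -> Rg (g * h)%g (x * y)).

Definition graded_module (R : comPzRingType) (M : lmodType R)
    (Rg : Gamma -> R -> Prop) (Mg : Gamma -> M -> Prop) : Prop :=
  add_subgroups Mg /\ direct_sum_decomp Mg /\
  (forall g h (r : R) (m : M), Rg g r -> Mg h m -> Mg (g * h)%g (r *: m)).

Variables (R : comPzRingType) (M : lmodType R)
          (Rg : Gamma -> R -> Prop) (Mg : Gamma -> M -> Prop).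

Definition homR (r : R) : Prop := exists g, Rg g r.
Definition homM (m : M) : Prop := exists g, Mg g m.

Definition submodule (U : M -> Prop) : Prop :=
  U 0 /\ (forall x y, U x -> U y -> U (x + y)) /\
  (forall (r : R) x, U x -> U (r *: x)).

(* U = (+)_g (U cap M_g): every element of U is a finite sum of elements of
   the sets U cap M_g (the sum is then automatically direct). *)
Definition graded_submodule (U : M -> Prop) : Prop :=
  submodule U /\
  forall u, U u -> exists s : seq (Gamma * M),
      (forall p, p \in s -> U p.2 /\ Mg p.1 p.2) /\ u = \sum_(p <- s) p.2.

Definition proper_submod (U : M -> Prop) : Prop := exists x, ~ U x.

Definition gr_maximal (U : M -> Prop) : Prop :=
  graded_submodule U /\ proper_submod U /\
  forall L : M -> Prop, graded_submodule L -> (forall x, U x -> L x) ->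
    (forall x, L x <-> U x) \/ (forall x, L x).

(* J_gr(M): intersection of all Gr-maximal submodules (= M if none). *)
Definition Jgr (x : M) : Prop := forall N, gr_maximal N -> N x.

Definition plus_Jgr (U : M -> Prop) (x : M) : Prop :=
  exists u j, U u /\ Jgr j /\ x = u + j.

Definition gr_weakly_Jgr_semiprime (U : M -> Prop) : Prop :=
  graded_submodule U /\ proper_submod U /\
  forall (g h : Gamma) (r : R) (m : M) (n : nat),
    Rg g r -> Mg h m -> (0 < n)%N ->
    r ^+ n *: m != 0 -> U (r ^+ n *: m) -> plus_Jgr U (r *: m).

End Defs.

From HB Require Import structures.
From mathcomp Require Import all_boot all_order all_algebra.
From Stdlib Require Import Classical.
Set Implicit Arguments. Unset Strict Implicit. Unset Printing Implicit Defensive.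
Import GRing.Theory.
Local Open Scope ring_scope.

(* The only non-formal ingredient is a property of Gr-maximal submodules N:
   for homogeneous r and m, N (r^(n+1) m) implies N (r m).  Indeed, if r m
   were not in N, then N + R(r m) is a graded submodule strictly above N,
   hence equal to M, so m = u + c r m with u in N; multiplying by r^n gives
   r^n m = r^n u + c r^(n+1) m, and induction brings r^(n+1) m in N down to
   r m in N.  Consequently r^n m = 0 forces r m into J_gr(M).
   With this, a weakly J_gr-semiprime U satisfies the semiprime condition
   for ALL homogeneous r, m with r^n m in U (the case r^n m = 0 lands in
   J_gr(M)); since U + J_gr(M) is a submodule and every element of a graded
   submodule K is a sum of homogeneous elements of K, the condition on
   submodules follows.  Conversely, the condition on submodules applied to
   the cyclic submodule R m of a homogeneous m gives back the condition on
   elements. *)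

Section GradedSubmodules.
Variables (Gamma : groupType) (R : comPzRingType) (M : lmodType R)
          (Rg : Gamma -> R -> Prop) (Mg : Gamma -> M -> Prop).
Hypotheses (HR : graded_ring Rg) (HM : graded_module Rg Mg).

Definition sumP (A B : M -> Prop) (y : M) : Prop :=
  exists a b, A a /\ B b /\ y = a + b.

Definition cyc (m : M) (y : M) : Prop := exists c : R, y = c *: m.

Lemma submodule_sum (P : M -> Prop) (I : eqType) (s : seq I) (F : I -> M) :
  submodule P -> (forall i, i \in s -> P (F i)) -> P (\sum_(i <- s) F i).
Proof.
move=> [P0 [PD _]] PF; rewrite big_seq.
by apply: (big_ind P) => // i; apply: PF.
Qed.

Lemma submodule_sumP (A B : M -> Prop) :
  submodule A -> submodule B -> submodule (sumP A B).
Proof.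
move=> [A0 [AD AZ]] [B0 [BD BZ]]; split; last split.
- by exists 0, 0; rewrite addr0.
- move=> x y [a [b [Ha [Hb ->]]]] [a' [b' [Ha' [Hb' ->]]]].
  exists (a + a'), (b + b'); rewrite addrACA.
  by split; [exact: AD | split; [exact: BD |]].
- move=> r x [a [b [Ha [Hb ->]]]]; exists (r *: a), (r *: b).
  by rewrite scalerDr; split; [exact: AZ | split; [exact: BZ |]].
Qed.

Lemma graded_sumP {A B : M -> Prop} :
  graded_submodule Mg A -> graded_submodule Mg B ->
  graded_submodule Mg (sumP A B).
Proof.
move=> [HA AG] [HB BG]; split; first exact: submodule_sumP.
move=> _ [a [b [Ha [Hb ->]]]].
have [s1 [H1 ->]] := AG a Ha; have [s2 [H2 ->]] := BG b Hb.
exists (s1 ++ s2); split; last by rewrite big_cat.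
move=> p; rewrite mem_cat => /orP [/H1 [Ap Mp] | /H2 [Bp Mp]]; split => //.
- by exists p.2, 0; rewrite addr0; split => //; split => //; case: HB.
- by exists 0, p.2; rewrite add0r; split => //; case: HA.
Qed.

(* The cyclic submodule generated by a homogeneous element is graded:
   c m = sum of c_g m over the homogeneous components c_g of c. *)
Lemma graded_cyc {h : Gamma} {m : M} : Mg h m -> graded_submodule Mg (cyc m).
Proof.
case: HR => _ [[Rdec _] _]; case: HM => _ [_ RMg] Hm.
split; first (split; last split).
- by exists 0; rewrite scale0r.
- by move=> x y [c ->] [d ->]; exists (c + d); rewrite scalerDl.
- by move=> r x [c ->]; exists (r * c); rewrite scalerA.
move=> _ [c ->]; have [s [_ [Hs ->]]] := Rdec c.
  exists (map (fun p => (p.1 * h, p.2 *: m)%g) s); split.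
- move=> _ /mapP [q Hq ->] /=; split; first by exists q.2.
  exact: RMg (Hs q Hq) Hm.
- by rewrite big_map scaler_suml.
Qed.

Lemma Jgr_submodule : submodule (Jgr Mg).
Proof.
split; last split.
- by move=> N [[[N0 _] _] _].
- move=> x y Jx Jy N HN; case: (HN) => [[[_ [ND _]] _] _].
  by apply: ND; [exact: Jx | exact: Jy].
- move=> r x Jx N HN; case: (HN) => [[[_ [_ NZ]] _] _].
  by apply: NZ; exact: Jx.
Qed.

Lemma plus_Jgr_submodule (U : M -> Prop) :
  submodule U -> submodule (plus_Jgr Mg U).
Proof. by move=> HU; apply: submodule_sumP => //; apply: Jgr_submodule. Qed.

Lemma gr_maximal_cover {N : M -> Prop} {h : Gamma} {m : M} :
  gr_maximal Mg N -> Mg h m -> ~ N m -> forall x, sumP N (cyc m) x.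
Proof.
move=> [HN [_ Nmax]] Hm Nm.
have [[N0 _] _] := HN.
have NNm : forall x, N x -> sumP N (cyc m) x.
  move=> x Nx; exists x, 0; split => //.
  by split; [exists 0; rewrite scale0r | rewrite addr0].
case: (Nmax _ (graded_sumP HN (graded_cyc Hm)) NNm) => // NmRm.
exfalso; apply: Nm; apply/NmRm.
by exists 0, m; split => //; split; [exists 1; rewrite scale1r | rewrite add0r].
Qed.

Lemma pow_cancel {N : M -> Prop} {r c : R} {m u : M} {n : nat} :
  submodule N -> N u -> m = u + c *: (r *: m) ->
  N (r ^+ n.+1 *: m) -> N (r *: m).
Proof.
move=> [_ [ND NZ]] Nu Em; elim: n => [//|n IH] Nrm; apply: IH.
have -> : r ^+ n.+1 *: m = r ^+ n.+1 *: u + c *: (r ^+ n.+2 *: m).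
  rewrite {1}Em scalerDr !scalerA; congr (_ + _ *: m).
  by rewrite [r ^+ n.+2]exprSr -mulrA mulrCA.
by apply: ND; apply: NZ.
Qed.

Lemma gr_maximal_semiprime {N : M -> Prop} {g h : Gamma} {r : R} {m : M}
    {n : nat} :
  gr_maximal Mg N -> Rg g r -> Mg h m -> N (r ^+ n.+1 *: m) -> N (r *: m).
Proof.
move=> HNmax Hr Hm Nrm; case: (classic (N (r *: m))) => // Nrm'.
have Hrm : Mg (g * h)%g (r *: m) by case: HM => _ [_ RMg]; exact: RMg Hr Hm.
have [u [_ [Nu [[c ->] Em]]]] := gr_maximal_cover HNmax Hrm Nrm' m.
have HNsub : submodule N by case: HNmax => [[]].
exact: pow_cancel HNsub Nu Em Nrm.
Qed.

Lemma Jgr_of_pow_zero {g h : Gamma} {r : R} {m : M} {n : nat} :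
  Rg g r -> Mg h m -> (0 < n)%N -> r ^+ n *: m = 0 -> Jgr Mg (r *: m).
Proof.
case: n => [//|n] Hr Hm _ E N HN.
apply: (gr_maximal_semiprime (n := n) HN Hr Hm); rewrite E.
by case: HN => [[[N0 _] _] _].
Qed.

Lemma weakly_semiprime_homogeneous {U : M -> Prop} {g h : Gamma} {r : R}
    {m : M} {n : nat} :
  gr_weakly_Jgr_semiprime Rg Mg U -> Rg g r -> Mg h m -> (0 < n)%N ->
  U (r ^+ n *: m) -> plus_Jgr Mg U (r *: m).
Proof.
move=> [[[U0 _] _] [_ HUs]] Hr Hm Hn Urm.
case: (eqVneq (r ^+ n *: m) 0) => [E | NE]; last exact: HUs Hr Hm Hn NE Urm.
exists 0, (r *: m); rewrite add0r; split => //; split => //.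
exact: Jgr_of_pow_zero Hr Hm Hn E.
Qed.

End GradedSubmodules.

Theorem corollary2p6 (Gamma : groupType) (R : comPzRingType) (M : lmodType R)
    (Rg : Gamma -> R -> Prop) (Mg : Gamma -> M -> Prop)
    (HR : graded_ring Rg) (HM : graded_module Rg Mg)
    (U : M -> Prop) (HU : graded_submodule Mg U) (HUp : proper_submod U) :
  gr_weakly_Jgr_semiprime Rg Mg U <->
  (forall (g : Gamma) (r : R) (K : M -> Prop) (n : nat),
     Rg g r -> graded_submodule Mg K -> (0 < n)%N ->
     (exists k, K k /\ r ^+ n *: k != 0) ->
     (forall k, K k -> U (r ^+ n *: k)) ->
     forall k, K k -> plus_Jgr Mg U (r *: k)).
Proof.
have [HUsub _] := HU; have [_ [_ UZ]] := HUsub.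
split.
-
  move=> HUs g r K n Hr [_ Kdec] Hn _ KU k Kk.
  have [s [Hs ->]] := Kdec k Kk.
  rewrite scaler_sumr; apply: submodule_sum; first exact: plus_Jgr_submodule.
  move=> p /Hs [Kp Mp].
  exact: (weakly_semiprime_homogeneous HR HM HUs Hr Mp Hn (KU _ Kp)).
-
  move=> HK; split => //; split => // g h r m n Hr Hm Hn NE Urm.
  have Rm_in : cyc m m by exists 1; rewrite scale1r.
  apply: (HK g r _ n Hr (graded_cyc HR HM Hm) Hn _ _ m Rm_in).
  + by exists m.
  + by move=> _ [c ->]; rewrite scalerA mulrC -scalerA; apply: UZ.
Qed.
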